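(* Let $f:\mathbb{R}^n\to\mathbb{R}$ be of class $C^{2+}$ with $L_f$-Lipschitz continuous gradient, let $g:\mathbb{R}^n\to\mathbb{R}\cup\{+\infty\}$ be proper, lower semicontinuous and $\rho$-weakly convex, let $\varphi=f+g$ with $\operatorname{argmin}\varphi\neq\emptyset$, and suppose $\{x:\varphi(x)\le\varphi(x^0)\}$ is bounded. Let $(x^k)$ be generated by the NTRA algorithm described in the context, and suppose that there is $M>0$ with $\|B_k\|\le M$ for all $k$ and there is $\beta\in(0,1)$ with $m_k(0)-m_k(d^k)\ge\beta\|\nabla\varphi_\gamma(x^k)\|\min\{\delta_k,\|\nabla\varphi_\gamma(x^k)\|/\|B_k\|\}$ for all $k$. Then $\liminf_{k\to\infty}\|\nabla\varphi_\gamma(x^k)\|=0$.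
   Context: $C^{2+}$: twice continuously differentiable with locally Lipschitz Hessian; $\rho$-weakly convex: $g+\frac\rho2\|\cdot\|^2$ convex. $\operatorname{prox}_{\gamma g}(x)=\operatorname{argmin}_z\{g(z)+\frac1{2\gamma}\|z-x\|^2\}$, $R_\gamma(x)=\gamma^{-1}(x-\operatorname{prox}_{\gamma g}(x-\gamma\nabla f(x)))$, forward-backward envelope $\varphi_\gamma(x)=\inf_u\{f(x)+\langle\nabla f(x),u-x\rangle+g(u)+\frac1{2\gamma}\|u-x\|^2\}$. $\partial_C$: Clarke generalized Jacobian. NTRA: given $x^0$, $\gamma\in(0,\min\{1/L_f,1/\rho\})$, $\delta_0>0$, $0<\mu_1<\mu_2<1$, $0<c_1<c_2<1<c_3$; for $k=0,1,\dots$: select $P_k\in\partial_C\operatorname{prox}_{\gamma g}(x^k-\gamma\nabla f(x^k))$; $Q_k=I-\gamma\nabla^2f(x^k)$, $B_k=\gamma^{-1}Q_k(I-P_kQ_k)$; stop if $R_\gamma(x^k)=0$ and $\lambda_{\min}(B_k)\ge0$; $d^k$ is an (approximate) solution of $\min_d m_k(d):=\varphi_\gamma(x^k)+\langle\nabla\varphi_\gamma(x^k),d\rangle+\frac12\langle B_kd,d\rangle$ s.t. $\|d\|\le\delta_k$; $\rho_k=\frac{\varphi_\gamma(x^k)-\varphi_\gamma(x^k+d^k)}{m_k(0)-m_k(d^k)}$; $x^{k+1}=x^k$ if $\rho_k<\mu_1$, else $x^k+d^k$; $\delta_{k+1}=c_1\delta_k$ if $\rho_k<\mu_1$, $c_2\delta_k$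 if $\mu_1\le\rho_k<\mu_2$, $c_3\delta_k$ if $\rho_k\ge\mu_2$. *)

From HB Require Import structures.
From mathcomp Require Import all_boot all_order all_algebra.
From mathcomp Require Import all_classical all_reals all_analysis.
Set Implicit Arguments. Unset Strict Implicit. Unset Printing Implicit Defensive.
Import Order.TTheory GRing.Theory Num.Theory.
Local Open Scope classical_set_scope.
Local Open Scope ring_scope.

Section Defs.
Context {R : realType} {n : nat}.
Local Notation vec := 'cV[R]_n.
Local Notation mat := 'M[R]_n.

Definition dot (u v : vec) : R := (u^T *m v) 0 0.
Definition enorm (u : vec) : R := Num.sqrt (dot u u).

Definition opnorm (A : mat) : R :=
  sup [set enorm (A *m v) | v in [set v : vec | enorm v <= 1]].

Definition is_grad (F : vec -> R) (x v : vec) : Prop :=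
  forall e : R, 0 < e -> exists d : R, 0 < d /\ forall y : vec,
    enorm (y - x) < d -> `|F y - F x - dot v (y - x)| <= e * enorm (y - x).

Definition is_jac (F : vec -> vec) (x : vec) (J : mat) : Prop :=
  forall e : R, 0 < e -> exists d : R, 0 < d /\ forall y : vec,
    enorm (y - x) < d -> enorm (F y - F x - J *m (y - x)) <= e * enorm (y - x).

(* the gradient / Jacobian (chosen; unique when it exists; 0 otherwise) *)
Definition grad (F : vec -> R) (x : vec) : vec :=
  match pselect (exists v, is_grad F x v) with
  | left h => projT1 (cid h) | right _ => 0 end.

Definition jac (F : vec -> vec) (x : vec) : mat :=
  match pselect (exists J, is_jac F x J) with
  | left h => projT1 (cid h) | right _ => 0 end.

Definition hess (F : vec -> R) (x : vec) : mat := jac (grad F) x.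

Definition C2plus (F : vec -> R) : Prop :=
  (forall x, exists v, is_grad F x v) /\
  (forall x, exists J, is_jac (grad F) x J) /\
  (forall x e, 0 < e -> exists d, 0 < d /\ forall y,
       enorm (y - x) < d -> opnorm (hess F y - hess F x) < e) /\
  (forall x, exists r K : R, 0 < r /\ forall y z,
       enorm (y - x) < r -> enorm (z - x) < r ->
       opnorm (hess F y - hess F z) <= K * enorm (y - z)).

Definition proper_fun (g : vec -> \bar R) : Prop :=
  (forall x, g x != -oo%E) /\ exists x, g x \is a fin_num.

Definition lsc (g : vec -> \bar R) : Prop :=
  forall (x : vec) (a : R), (a%:E < g x)%E ->
    exists d : R, 0 < d /\ forall y, enorm (y - x) < d -> (a%:E < g y)%E.

Definition convex_ext (h : vec -> \bar R) : Prop :=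
  forall (x y : vec) (t : R), 0 < t -> t < 1 ->
    (h (t *: x + (1 - t) *: y)%R <= t%:E * h x + (1 - t)%:E * h y)%E.

Definition weakly_convex (rho : R) (g : vec -> \bar R) : Prop :=
  convex_ext (fun x => (g x + (rho / 2 * enorm x ^+ 2)%R%:E)%E).

(* proximal mapping: the minimizer (chosen; unique in the setting of the theorem) *)
Definition is_prox (gam : R) (g : vec -> \bar R) (x z : vec) : Prop :=
  forall u, (g z + (enorm (z - x) ^+ 2 / (2 * gam))%:E
             <= g u + (enorm (u - x) ^+ 2 / (2 * gam))%:E)%E.

Definition prox (gam : R) (g : vec -> \bar R) (x : vec) : vec :=
  match pselect (exists z, is_prox gam g x z) with
  | left h => projT1 (cid h) | right _ => 0 end.

Definition differentiable_at (F : vec -> vec) (x : vec) : Prop :=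
  exists J, is_jac F x J.

Definition bouligand_jac (F : vec -> vec) (z : vec) : set mat :=
  [set J : mat | exists zs : nat -> vec,
     (forall j, differentiable_at F (zs j)) /\
     (forall e : R, 0 < e -> exists N, forall j, (N <= j)%N -> enorm (zs j - z) < e) /\
     (forall (i k : 'I_n) (e : R), 0 < e -> exists N, forall j, (N <= j)%N ->
        `|jac F (zs j) i k - J i k| < e)].

Definition conv_hull (S : set mat) : set mat :=
  [set A | exists (m : nat) (w : 'I_m -> R) (B : 'I_m -> mat),
     (forall i, 0 <= w i) /\ \sum_(i < m) w i = 1 /\ (forall i, S (B i)) /\
     A = \sum_(i < m) w i *: B i].

Definition clarke_jac (F : vec -> vec) (z : vec) : set mat :=
  conv_hull (bouligand_jac F z).

Definition Rgam (f : vec -> R) (g : vec -> \bar R) (gam : R) (x : vec) : vec :=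
  gam^-1 *: (x - prox gam g (x - gam *: grad f x)).

Definition FBE_ext (f : vec -> R) (g : vec -> \bar R) (gam : R) (x : vec) : \bar R :=
  ereal_inf (range (fun u : vec =>
     ((f x + dot (grad f x) (u - x))%:E + g u
      + (enorm (u - x) ^+ 2 / (2 * gam))%:E)%E)).

(* real-valued FBE (finite in the setting of the theorem) *)
Definition FBE (f : vec -> R) (g : vec -> \bar R) (gam : R) (x : vec) : R :=
  fine (FBE_ext f g gam x).

Definition Qmat (f : vec -> R) (gam : R) (x : vec) : mat := 1%:M - gam *: hess f x.

Definition Bmat (f : vec -> R) (gam : R) (x : vec) (P : mat) : mat :=
  gam^-1 *: (Qmat f gam x *m (1%:M - P *m Qmat f gam x)).

Definition model (f : vec -> R) (g : vec -> \bar R) (gam : R) (x : vec) (B : mat)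
  (d : vec) : R :=
  FBE f g gam x + dot (grad (FBE f g gam) x) d + 1/2 * dot (B *m d) d.

(* min{delta, a/b}, with a/0 read as +infinity *)
Definition min_ratio (delta a b : R) : R :=
  if b == 0 then delta else Num.min delta (a / b).

End Defs.

(* Assume ||grad psi(x_k)|| >= eps for all large k, psi the forward-backward
   envelope.  A nonzero gradient forces psi to be differentiable at x_k, the
   predicted decrease is at least beta eps min(delta_k, eps/M), and successful
   steps decrease psi by mu1 times that; psi is bounded below by min phi, so
   successful radii tend to 0 and the iterates have finite length, hence
   converge to some x*.  psi is the infimum over u of models that are smooth in
   x with constants controlled by the Hessian of f, Lipschitz near x*; at a
   point of differentiability this gives the uniform quadratic upper bound
   psi(x_k + d) <= psi(x_k) + <grad psi(x_k), d> + C ||d||^2.  Hence every step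
   with a small radius is very successful and enlarges the radius, while large
   radii are rejected and shrunk: the radius can settle neither below nor above
   the threshold, a contradiction. *)

From mathcomp Require Import all_boot all_order all_algebra.
From mathcomp Require Import all_classical all_reals all_analysis.
From mathcomp Require Import ring lra.
Import Order.TTheory GRing.Theory Num.Theory.
Import numFieldNormedType.Exports.
Local Open Scope classical_set_scope.
Local Open Scope ring_scope.

Section Euclid.
Context {R : realType} {n : nat}.
Local Notation vec := 'cV[R]_n.
Local Notation mat := 'M[R]_n.
Implicit Types (u v w : vec) (A : mat).

Lemma dotE u v : dot u v = \sum_i u i 0 * v i 0.
Proof. by rewrite /dot !mxE; apply: eq_bigr => i _; rewrite mxE. Qed.

Lemma dotC u v : dot u v = dot v u.
Proof. by rewrite !dotE; apply: eq_bigr => i _; rewrite mulrC. Qed.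

Lemma dotDl u v w : dot (u + v) w = dot u w + dot v w.
Proof. by rewrite !dotE -big_split; apply: eq_bigr => i _; rewrite !mxE mulrDl. Qed.

Lemma dotDr u v w : dot w (u + v) = dot w u + dot w v.
Proof. by rewrite dotC dotDl !(dotC w). Qed.

Lemma dotZl a u v : dot (a *: u) v = a * dot u v.
Proof. by rewrite !dotE mulr_sumr; apply: eq_bigr => i _; rewrite !mxE mulrA. Qed.

Lemma dotZr a u v : dot u (a *: v) = a * dot u v.
Proof. by rewrite dotC dotZl dotC. Qed.

Lemma dotNl u v : dot (- u) v = - dot u v.
Proof. by rewrite -scaleN1r dotZl mulN1r. Qed.

Lemma dotNr u v : dot u (- v) = - dot u v.
Proof. by rewrite dotC dotNl dotC. Qed.

Lemma dotBl u v w : dot (u - v) w = dot u w - dot v w.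
Proof. by rewrite dotDl dotNl. Qed.

Lemma dotBr u v w : dot w (u - v) = dot w u - dot w v.
Proof. by rewrite dotDr dotNr. Qed.

Lemma dot0l u : dot 0 u = 0.
Proof. by rewrite -(scale0r (0 : vec)) dotZl mul0r. Qed.

Lemma dot0r u : dot u 0 = 0.
Proof. by rewrite dotC dot0l. Qed.

Lemma dot_mulmxl A u v : dot (A *m u) v = dot u (A^T *m v).
Proof. by rewrite /dot trmx_mul mulmxA. Qed.

Lemma dotvv_ge0 u : 0 <= dot u u.
Proof. by rewrite dotE; apply: sumr_ge0 => i _; rewrite -expr2 sqr_ge0. Qed.

Lemma dotvv_eq0 u : (dot u u == 0) = (u == 0).
Proof.
apply/idP/eqP => [|->]; last by rewrite dot0l.
rewrite dotE psumr_eq0; last by move=> i _; rewrite -expr2 sqr_ge0.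
move=> /allP u0; apply/matrixP => i j; rewrite ord1 mxE.
by have := u0 i (mem_index_enum i); rewrite -expr2 sqrf_eq0 => /eqP.
Qed.

Lemma enorm_ge0 u : 0 <= enorm u.
Proof. exact: sqrtr_ge0. Qed.

Lemma sqr_enorm u : enorm u ^+ 2 = dot u u.
Proof. by rewrite /enorm sqr_sqrtr // dotvv_ge0. Qed.

Lemma enorm0 : enorm (0 : vec) = 0.
Proof. by rewrite /enorm dot0l sqrtr0. Qed.

Lemma enormZ a u : enorm (a *: u) = `|a| * enorm u.
Proof. by rewrite /enorm dotZl dotZr mulrA -expr2 sqrtrM ?sqr_ge0 // sqrtr_sqr. Qed.

Lemma enormN u : enorm (- u) = enorm u.
Proof. by rewrite -scaleN1r enormZ normrN normr1 mul1r. Qed.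

Lemma enormBC u v : enorm (u - v) = enorm (v - u).
Proof. by rewrite -enormN opprB. Qed.

Lemma sqr_enormB u v : enorm (u - v) ^+ 2 = enorm u ^+ 2 - 2 * dot u v + enorm v ^+ 2.
Proof. by rewrite !sqr_enorm dotBl !dotBr (dotC v u); ring. Qed.

Lemma cauchy_schwarz u v : `|dot u v| <= enorm u * enorm v.
Proof.
suff dot_sqr : dot u v ^+ 2 <= dot u u * dot v v.
  rewrite -(sqrtr_sqr (dot u v)) /enorm -sqrtrM ?dotvv_ge0 //.
  by rewrite ler_sqrt // mulr_ge0 ?dotvv_ge0.
have [v0|vn0] := eqVneq (dot v v) 0.
  by move/eqP: v0; rewrite dotvv_eq0 => /eqP ->; rewrite !dot0r expr0n /= mulr0.
have vv_gt0 : 0 < dot v v by rewrite lt_def vn0 dotvv_ge0.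
pose t := dot u v / dot v v.
have := dotvv_ge0 (u - t *: v).
rewrite dotBl !dotBr !dotZl !dotZr (dotC v u).
have -> : dot u u - t * dot u v - (t * dot u v - t * (t * dot v v))
    = dot u u - dot u v ^+ 2 / dot v v by rewrite /t; field.
by rewrite subr_ge0 ler_pdivrMr.
Qed.

Lemma dot_le_enorm u v : dot u v <= enorm u * enorm v.
Proof. exact: le_trans (ler_norm _) (cauchy_schwarz u v). Qed.

Lemma ler_enormD u v : enorm (u + v) <= enorm u + enorm v.
Proof.
rewrite -ler_sqr ?nnegrE ?addr_ge0 ?enorm_ge0 //.
rewrite sqr_enorm dotDl !dotDr (dotC v u) sqrrD !sqr_enorm.
have := dot_le_enorm u v; lra.
Qed.

Lemma ler_enorm_distD u v w : enorm (u - w) <= enorm (u - v) + enorm (v - w).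
Proof. by have := ler_enormD (u - v) (v - w); rewrite addrA subrK. Qed.

Lemma ler_norm_coord u i : `|u i 0| <= enorm u.
Proof.
rewrite -ler_sqr ?nnegrE ?enorm_ge0 // sqr_enorm real_normK ?num_real //.
rewrite dotE (bigD1 i) //= -expr2 lerDl; apply: sumr_ge0 => j _.
by rewrite -expr2 sqr_ge0.
Qed.

Definition sqr_frobenius A : R := \sum_i \sum_j A i j ^+ 2.

Lemma sqr_frobenius_ge0 A : 0 <= sqr_frobenius A.
Proof. by apply: sumr_ge0 => i _; apply: sumr_ge0 => j _; apply: sqr_ge0. Qed.

Lemma sqr_enorm_mulmx_le A v : dot (A *m v) (A *m v) <= sqr_frobenius A * dot v v.
Proof.
rewrite dotE /sqr_frobenius mulr_suml; apply: ler_sum => i _.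
pose r : vec := \col_j A i j.
have -> : (A *m v) i 0 = dot r v.
  by rewrite mxE dotE; apply: eq_bigr => j _; rewrite mxE.
have -> : \sum_j A i j ^+ 2 = dot r r.
  by rewrite dotE; apply: eq_bigr => j _; rewrite mxE expr2.
rewrite -expr2 -(sqr_enorm r) -(sqr_enorm v) -exprMn.
rewrite -[X in X <= _]real_normK ?num_real //.
by rewrite ler_sqr ?nnegrE ?normr_ge0 ?mulr_ge0 ?enorm_ge0 // cauchy_schwarz.
Qed.

Lemma opnorm_has_ubound A :
  has_ubound [set enorm (A *m v) | v in [set v : vec | enorm v <= 1]].
Proof.
exists (Num.sqrt (sqr_frobenius A)) => _ [v /= v1 <-].
rewrite /enorm ler_sqrt ?sqr_frobenius_ge0 //.
apply: le_trans (sqr_enorm_mulmx_le A v) _.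
rewrite -[X in _ <= X]mulr1 ler_wpM2l ?sqr_frobenius_ge0 //.
by rewrite -sqr_enorm -[1](expr1n _ 2) ler_sqr ?nnegrE ?enorm_ge0.
Qed.

Lemma opnorm_ge0 A : 0 <= opnorm A.
Proof.
apply: le_trans (ub_le_sup (opnorm_has_ubound A) _); first exact: (enorm_ge0 (A *m 0)).
by exists 0 => //=; rewrite enorm0.
Qed.

Lemma enorm_mulmx_le A v : enorm (A *m v) <= opnorm A * enorm v.
Proof.
have [v0|vn0] := eqVneq (enorm v) 0.
  have /eqP : dot v v = 0 by rewrite -sqr_enorm v0 expr0n.
  by rewrite dotvv_eq0 => /eqP ->; rewrite mulmx0 enorm0 mulr0.
have v_gt0 : 0 < enorm v by rewrite lt_def vn0 enorm_ge0.
pose w := (enorm v)^-1 *: v.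
have w1 : enorm w <= 1 by rewrite /w enormZ ger0_norm ?invr_ge0 ?enorm_ge0 // mulVf.
have := ub_le_sup (opnorm_has_ubound A) (ex_intro2 _ _ w w1 erefl).
rewrite /w -scalemxAr enormZ ger0_norm ?invr_ge0 ?enorm_ge0 //.
by rewrite -/(opnorm A) mulrC -ler_pdivlMr ?invr_gt0 // invrK.
Qed.

Lemma norm_dot_mulmx_le A v : `|dot (A *m v) v| <= opnorm A * enorm v ^+ 2.
Proof.
apply: le_trans (cauchy_schwarz _ _) _.
by rewrite expr2 mulrA ler_wpM2r ?enorm_ge0 ?enorm_mulmx_le.
Qed.

End Euclid.

Section RealDerivative.
Context {R : realType}.
Implicit Types (h dh : R -> R).

Definition has_derivative h dh := forall t e, 0 < e -> exists del, 0 < del /\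
  forall s, `|s - t| < del -> `|h s - h t - dh t * (s - t)| <= e * `|s - t|.

Lemma has_derivative_is_derive {h dh} (t : R) : has_derivative h dh -> is_derive t 1 h (dh t).
Proof.
move=> Hh.
have Dh : (fun s : R => s^-1 *: ((h \o shift t) (s *: (1:R)) - h t)) @ (0:R)^' --> dh t.
  apply/cvgrPdist_le => e e0.
  have [del [del0 Hdel]] := Hh t e e0.
  near=> s.
  have s0 : s != 0 by near: s; exact: nbhs_dnbhs_neq.
  have sdel : `|s| < del by near: s; exact: dnbhs0_lt.
  have := Hdel (s + t); rewrite addrK => /(_ sdel) Hs.
  rewrite /= /shift -[s%:A]/(s * 1) mulr1 -[s^-1 *: _]/(s^-1 * _).
  have -> : dh t - s^-1 * (h (s + t) - h t) = - (s^-1 * (h (s + t) - h t - dh t * s)).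
    by field.
  by rewrite normrN normrM normfV mulrC ler_pdivrMr ?normr_gt0.
apply: DeriveDef; first exact: (cvgP _ Dh).
exact: (cvg_lim _ Dh).
Unshelve. all: by end_near. Qed.

Lemma has_derivative_continuous {h dh} : has_derivative h dh -> continuous h.
Proof.
move=> Hh t; apply: differentiable_continuous; apply/derivable1_diffP.
by have [] := has_derivative_is_derive t Hh.
Qed.

Lemma has_derivativeN {h dh} : has_derivative h dh ->
  has_derivative (fun t => - h t) (fun t => - dh t).
Proof.
move=> Hh t e e0; have [del [del0 Hdel]] := Hh t e e0; exists del; split => // s /Hdel.
by rewrite -normrN; congr (`|_| <= _); ring.
Qed.

Lemma has_derivative_sub_quad {h dh} a b : has_derivative h dh ->
  has_derivative (fun t => h t - a * t - b * t ^+ 2) (fun t => dh t - a - 2 * b * t).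
Proof.
move=> Hh t e e0.
have [del [del0 Hdel]] := Hh t (e / 2) (divr_gt0 e0 (ltr0Sn _ 1)).
have b0 : 0 < 2 * (`|b| + 1) by rewrite mulr_gt0 // ltr_pwDr.
exists (Num.min del (e / (2 * (`|b| + 1)))); split; first by rewrite lt_min del0 divr_gt0.
move=> s; rewrite lt_min => /andP[sdel se].
have -> : h s - a * s - b * s ^+ 2 - (h t - a * t - b * t ^+ 2) - (dh t - a - 2 * b * t) * (s - t)
    = (h s - h t - dh t * (s - t)) - b * (s - t) ^+ 2 by ring.
apply: le_trans (ler_normB _ _) _.
have : `|b * (s - t) ^+ 2| <= e / 2 * `|s - t|.
  rewrite normrM normrX.
  have := normr_ge0 (s - t); have := normr_ge0 b.
  move: se; rewrite ltr_pdivlMr // => se; nra.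
by have := Hdel s sdel; lra.
Qed.

(* Mean value theorem applied to [t |-> h t - dh 0 * t - b * t ^+ 2]. *)
Lemma taylor_remainder_le {h dh} b : has_derivative h dh ->
  (forall t, 0 <= t <= 1 -> dh t - dh 0 <= 2 * b * t) ->
  h 1 - h 0 - dh 0 <= b.
Proof.
move=> Hh dh_le.
have dk := has_derivative_sub_quad (dh 0) b Hh.
have [c c01] := MVT (@ltr01 R) (fun t _ => has_derivative_is_derive t dk)
  (continuous_subspaceT (has_derivative_continuous dk)).
rewrite subr0 mulr1 expr1n expr0n /= mulr1 !mulr0 !subr0 => E.
have : 0 <= c <= 1 by move: c01; rewrite in_itv /= => /andP[/ltW -> /ltW ->].
by move/dh_le; move: E; lra.
Qed.

End RealDerivative.

Section VectorCalculus.
Context {R : realType} {n : nat}.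
Local Notation vec := 'cV[R]_n.
Local Notation mat := 'M[R]_n.

Lemma grad_is_grad {F : vec -> R} {y} : (exists v, is_grad F y v) -> is_grad F y (grad F y).
Proof. by rewrite /grad; case: pselect => // h _; exact: (projT2 (cid h)). Qed.

(* [grad F y] is [0] when [F] is not differentiable at [y], so a nonzero
   gradient certifies differentiability. *)
Lemma grad_neq0_is_grad {F : vec -> R} {y} : grad F y != 0 -> is_grad F y (grad F y).
Proof.
by rewrite /grad; case: pselect => [h _|_]; [exact: (projT2 (cid h))|rewrite eqxx].
Qed.

Lemma jac_is_jac {G : vec -> vec} {y} : (exists J, is_jac G y J) -> is_jac G y (jac G y).
Proof. by rewrite /jac; case: pselect => // h _; exact: (projT2 (cid h)). Qed.

Lemma line_distE (x d : vec) (s t : R) : (x + s *: d) - (x + t *: d) = (s - t) *: d.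
Proof. by rewrite scalerBl opprD addrACA subrr add0r. Qed.

Lemma has_derivative_along_grad (F : vec -> R) (x d : vec) :
  (forall y, is_grad F y (grad F y)) ->
  has_derivative (fun t => F (x + t *: d)) (fun t => dot (grad F (x + t *: d)) d).
Proof.
move=> HF t e e0.
have d1 : 0 < enorm d + 1 by rewrite ltr_pwDr ?enorm_ge0.
have [del [del0 Hdel]] := HF (x + t *: d) (e / (enorm d + 1)) (divr_gt0 e0 d1).
exists (del / (enorm d + 1)); split; first exact: divr_gt0.
move=> s sdel.
have std : `|s - t| * enorm d < del.
  move: sdel; rewrite ltr_pdivlMr // => sdel; apply: le_lt_trans sdel.
  by rewrite ler_wpM2l ?normr_ge0 // lerDl.
have := Hdel (x + s *: d); rewrite line_distE enormZ dotZr => /(_ std).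
rewrite mulrC => /le_trans; apply.
have -> : e / (enorm d + 1) * (`|s - t| * enorm d)
    = (e * `|s - t|) * (enorm d / (enorm d + 1)) by ring.
rewrite -[X in _ <= X]mulr1 ler_wpM2l ?mulr_ge0 ?(ltW e0) ?normr_ge0 //.
by rewrite ler_pdivrMr // mul1r lerDl.
Qed.

Lemma has_derivative_along_jac (G : vec -> vec) (x d w : vec) :
  (forall y, is_jac G y (jac G y)) ->
  has_derivative (fun t => dot (G (x + t *: d)) w)
                 (fun t => dot (jac G (x + t *: d) *m d) w).
Proof.
move=> HG t e e0.
set a := enorm d; set b := enorm w.
have a0 : 0 <= a := enorm_ge0 d; have b0 : 0 <= b := enorm_ge0 w.
have ab1 : 0 < (a + 1) * (b + 1) by rewrite mulr_gt0 // ltr_pwDr.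
have [del [del0 Hdel]] := HG (x + t *: d) (e / ((a + 1) * (b + 1))) (divr_gt0 e0 ab1).
exists (del / (a + 1)); split; first by rewrite divr_gt0 // ltr_pwDr.
move=> s sdel.
have std : `|s - t| * a < del.
  move: sdel; rewrite ltr_pdivlMr ?ltr_pwDr // => sdel; apply: le_lt_trans sdel.
  by rewrite ler_wpM2l ?normr_ge0 // lerDl.
have := Hdel (x + s *: d); rewrite line_distE enormZ => /(_ std) Hs.
set D := G (x + s *: d) - G (x + t *: d) - jac G (x + t *: d) *m ((s - t) *: d) in Hs.
have -> : dot (G (x + s *: d)) w - dot (G (x + t *: d)) w
          - dot (jac G (x + t *: d) *m d) w * (s - t) = dot D w.
  by rewrite /D !dotBl -scalemxAr dotZl mulrC.
apply: le_trans (cauchy_schwarz _ _) _.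
apply: le_trans (ler_wpM2r b0 Hs) _.
have -> : e / ((a + 1) * (b + 1)) * (`|s - t| * a) * b
    = (e * `|s - t|) * (a / (a + 1) * (b / (b + 1))).
  by field; rewrite !gt_eqF ?ltr_pwDr.
rewrite -[X in _ <= X]mulr1 ler_wpM2l ?mulr_ge0 ?(ltW e0) ?normr_ge0 //.
by apply: mulr_ile1; rewrite ?divr_ge0 ?addr_ge0 ?ler_pdivrMr ?mul1r ?lerDl ?ltr_pwDr.
Qed.

Lemma descent_lemma {f : vec -> R} {L : R} :
  (forall y, is_grad f y (grad f y)) ->
  (forall y z, enorm (grad f y - grad f z) <= L * enorm (y - z)) ->
  forall x y, `|f y - f x - dot (grad f x) (y - x)| <= L / 2 * enorm (y - x) ^+ 2.
Proof.
move=> HG HL x y; set d := y - x.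
have Hh := has_derivative_along_grad f x d HG.
have slope_le t : 0 <= t <= 1 ->
    `|dot (grad f (x + t *: d)) d - dot (grad f (x + 0 *: d)) d|
      <= 2 * (L / 2 * enorm d ^+ 2) * t.
  move=> /andP[t0 _]; rewrite scale0r addr0 -dotBl.
  apply: le_trans (cauchy_schwarz _ _) _.
  apply: le_trans (ler_wpM2r (enorm_ge0 d) (HL _ _)) _.
  rewrite addrC addKr enormZ ger0_norm //.
  by rewrite le_eqVlt; apply/orP; left; apply/eqP; field.
have up := taylor_remainder_le _ Hh (fun t ht => le_trans (ler_norm _) (slope_le t ht)).
have low : - f (x + 1 *: d) - - f (x + 0 *: d) - - dot (grad f (x + 0 *: d)) d
    <= L / 2 * enorm d ^+ 2.
  apply: (taylor_remainder_le _ (has_derivativeN Hh)) => t ht.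
  by apply: le_trans (slope_le t ht); rewrite -opprD -normrN; apply: ler_norm.
move: up low; rewrite /= !scale0r !scale1r !addr0 (addrC x d) subrK.
by rewrite ler_norml => up low; rewrite up andbT; lra.
Qed.

Lemma grad_taylor_le {f : vec -> R} (x d w : vec) {K : R} :
  (forall y, is_jac (grad f) y (jac (grad f) y)) ->
  (forall t, 0 <= t <= 1 -> opnorm (hess f (x + t *: d) - hess f x) <= K * t * enorm d) ->
  dot (grad f (x + d)) w - dot (grad f x) w
    <= dot (hess f x *m d) w + K / 2 * enorm d ^+ 2 * enorm w.
Proof.
move=> HJ HK.
have slope_le t : 0 <= t <= 1 ->
    dot (jac (grad f) (x + t *: d) *m d) w - dot (jac (grad f) (x + 0 *: d) *m d) w
      <= 2 * (K / 2 * enorm d ^+ 2 * enorm w) * t.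
  move=> t01; rewrite scale0r addr0 -dotBl -mulmxBl.
  apply: le_trans (dot_le_enorm _ _) _.
  apply: le_trans (ler_wpM2r (enorm_ge0 w) (enorm_mulmx_le _ _)) _.
  apply: le_trans (ler_wpM2r (enorm_ge0 w) (ler_wpM2r (enorm_ge0 d) (HK t t01))) _.
  by rewrite le_eqVlt; apply/orP; left; apply/eqP; field.
have := taylor_remainder_le _ (has_derivative_along_jac (grad f) x d w HJ) slope_le.
by rewrite /= !scale0r !scale1r !addr0 /hess; lra.
Qed.

(* Testing an almost tight majorant at [x - t d] for small [t] shows that its
   slope [a] cannot exceed the gradient in the direction [d]. *)
Lemma quadratic_majorant_grad {psi : vec -> R} {x G : vec} {C D : R} :
  is_grad psi x G ->
  (forall nu, 0 < nu -> exists a c, c < psi x + nu /\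
     forall e, enorm e <= D -> psi (x + e) <= c + dot a e + C * enorm e ^+ 2) ->
  forall d, enorm d <= D -> psi (x + d) <= psi x + dot G d + C * enorm d ^+ 2.
Proof.
move=> HG Hmaj d dD; apply/ler_addgt0Pr => eta eta0.
set nd := enorm d; have nd0 : 0 <= nd := enorm_ge0 d.
have nd1 : 0 < nd + 1 by rewrite ltr_pwDr.
have Cnd1 : 0 < `|C| * nd ^+ 2 + 1 by rewrite ltr_pwDr ?mulr_ge0 ?sqr_ge0.
have e4 : 0 < eta / 4 by rewrite divr_gt0.
have [del [del0 Hdel]] := HG (eta / 4 / (nd + 1)) (divr_gt0 e4 nd1).
pose t := Num.min 1 (Num.min (del / (nd + 1)) (eta / 4 / (`|C| * nd ^+ 2 + 1))).
have t0 : 0 < t by rewrite !lt_min ltr01 !divr_gt0.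
have t1 : t <= 1 by rewrite ge_min lexx.
have t_del : t * nd < del.
  have : t <= del / (nd + 1) by rewrite !ge_min lexx orbT.
  rewrite ler_pdivlMr // => h; apply: lt_le_trans h.
  by rewrite ltr_pM2l // ltrDl.
have quad_small : C * (t * nd) ^+ 2 <= eta / 4 * t.
  have : t <= eta / 4 / (`|C| * nd ^+ 2 + 1) by rewrite !ge_min lexx !orbT.
  rewrite ler_pdivlMr // => h.
  apply: le_trans (ler_norm _) _; rewrite normrM normrX (ger0_norm (mulr_ge0 (ltW t0) nd0)).
  have -> : `|C| * (t * nd) ^+ 2 = t * (t * (`|C| * nd ^+ 2)) by ring.
  rewrite [eta / 4 * t]mulrC ler_pM2l //.
  by move: h; rewrite mulrDr mulr1; lra.
have [a [c [c_lt Hc]]] := Hmaj (eta / 4 * t) (mulr_gt0 e4 t0).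
have at_d := Hc d dD.
have td : enorm (- t *: d) = t * nd by rewrite enormZ normrN gtr0_norm.
have at_td : psi (x + - t *: d) <= c + dot a (- t *: d) + C * (t * nd) ^+ 2.
  by rewrite -td; apply: Hc; rewrite td; apply: le_trans dD; rewrite ler_piMl.
have near_x : psi x - t * dot G d - eta / 4 * t <= psi (x + - t *: d).
  have := Hdel (x + - t *: d); rewrite addrAC subrr add0r td => /(_ t_del).
  rewrite dotZr ler_norml => /andP[h _].
  have : eta / 4 / (nd + 1) * (t * nd) <= eta / 4 * t.
    have -> : eta / 4 / (nd + 1) * (t * nd) = eta / 4 * t * (nd / (nd + 1)).
      by field; rewrite gt_eqF.
    rewrite -[X in _ <= X]mulr1; apply: ler_wpM2l; first by rewrite mulr_ge0 // ltW.
    by rewrite ler_pdivrMr // mul1r lerDl.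
  lra.
have slope_le : t * dot a d <= t * (dot G d + 3 * eta / 4).
  move: at_td; rewrite dotZr mulNr; lra.
have : eta / 4 * t <= eta / 4 by apply: ler_piMr; [exact: ltW|exact: t1].
by rewrite ler_pM2l // in slope_le; rewrite -/nd in at_d; lra.
Qed.

End VectorCalculus.

Section Sequences.
Context {R : realType}.
Implicit Types (a u delta : nat -> R).

Lemma limn_einf_eq0 u : (forall k, 0 <= u k) ->
  (forall e, 0 < e -> forall K, exists k, (K <= k)%N /\ u k < e) ->
  limn_einf (fun k => (u k)%:E) = 0%E.
Proof.
move=> u_ge0 u_small; rewrite limn_einf_lim.
suff -> : einfs (fun k => (u k)%:E) = fun _ => 0%E by rewrite lim_cst.
apply: funext => K; rewrite /einfs /=.
have lb : (0 <= ereal_inf (sdrop (fun k => (u k)%:E) K))%E.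
  by apply: le_ereal_inf_tmp => _ [k _ <-]; rewrite lee_fin.
have ub e : 0 < e -> (ereal_inf (sdrop (fun k => (u k)%:E) K) < e%:E)%E.
  move=> e0; have [k [Kk uk]] := u_small e e0 K.
  apply: le_lt_trans (_ : (u k)%:E < e%:E)%E; last by rewrite lte_fin.
  by apply: ereal_inf_lbound; exists k.
move: lb ub; case: (ereal_inf _) => [r| |] //=; last by move=> _ /(_ 1 ltr01).
rewrite lee_fin => r0 ub; congr (_%:E); apply/eqP; rewrite eq_le r0 andbT leNgt.
by apply/negP => /ub; rewrite lte_fin ltxx.
Qed.

Lemma exists_expr_lt {q e : R} : 0 <= q < 1 -> 0 < e -> exists j, q ^+ j < e.
Proof.
move=> /andP[q0 q1] e0.
have q_lt1 : `|q| < 1 by rewrite ger0_norm.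
have /cvgrPdist_lt /(_ e e0) [N _ HN] := cvg_expr q_lt1.
by exists N; have := HN N (leqnn N); rewrite sub0r normrN ger0_norm ?exprn_ge0.
Qed.

Lemma le_tail_nonincreasing {a K} : (forall k, (K <= k)%N -> a k.+1 <= a k) ->
  forall p q, (K <= p <= q)%N -> a q <= a p.
Proof.
move=> a_step p q /andP[Kp pq]; rewrite -(subnKC pq).
elim: (q - p)%N => [|j IH]; first by rewrite addn0.
by apply: le_trans IH; rewrite addnS a_step // (leq_trans Kp) ?leq_addr.
Qed.

Lemma nonincreasing_tail_drops_small {a K} {m : R} :
  (forall k, (K <= k)%N -> a k.+1 <= a k) -> (forall k, m <= a k) ->
  forall eta, 0 < eta -> exists N, (K <= N)%N /\
    forall p q, (N <= p <= q)%N -> a p - a q < eta.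
Proof.
move=> a_step a_ge eta eta0.
pose S := [set a k | k in [set k | (K <= k)%N]].
have S_lb : has_lbound S by exists m => _ [k _ <-].
have S_inf : has_inf S by split; [exists (a K), K => /= |].
have [_ [N KN <-] aN_lt] := inf_adherent eta0 S_inf.
exists N; split => // p q /andP[Np pq].
have : inf S <= a q.
  by apply: (ge_inf S_lb); exists q => //=; rewrite (leq_trans KN) ?(leq_trans Np).
by have := le_tail_nonincreasing a_step N p; rewrite KN Np => /(_ isT); lra.
Qed.

Lemma cvg_real_cauchy a :
  (forall e, 0 < e -> exists N, forall p q, (N <= p)%N -> (N <= q)%N -> `|a p - a q| < e) ->
  exists l, forall e, 0 < e -> exists N, forall k, (N <= k)%N -> `|a k - l| < e.
Proof.
move=> a_cauchy.
have /cvg_ex [l a_l] : cvgn a.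
  apply: cauchy_cvg; apply: cauchy_exP => e e0.
  have [N HN] := a_cauchy e e0.
  exists (a N), N => // k Nk /=.
  by rewrite /ball /= -normrN opprB; apply: HN.
exists l => e e0; have [N _ HN] := (cvgrPdist_lt _ _).1 a_l e e0.
by exists N => k Nk; rewrite -normrN opprB; apply: HN.
Qed.

(* Once above [th] the radius stays above it, so it either always expands or
   eventually always contracts. *)
Lemma radius_gap_absurd {delta} {c1 c3 th : R} N :
  0 < c1 -> c1 < 1 -> 1 < c3 -> 0 < th -> (forall k, 0 < delta k) ->
  (forall k, (N <= k)%N -> delta k <= th -> delta k < c1 * th /\ delta k.+1 = c3 * delta k) ->
  (forall k, (N <= k)%N -> th < delta k -> delta k.+1 = c1 * delta k) -> False.
Proof.
move=> c1_gt0 c1_lt1 c3_gt1 th_gt0 delta_gt0 below above.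
have stay_above k : (N <= k)%N -> th < delta k -> th < delta k.+1.
  move=> Nk th_lt; rewrite ltNge; apply/negP => /(below _ (leq_trans Nk (leqnSn k))) [+ _].
  by rewrite (above k Nk th_lt) ltr_pM2l // => /(lt_trans th_lt); rewrite ltxx.
have [k0 [Nk0 th_lt_k0]] : exists k0, (N <= k0)%N /\ th < delta k0.
  apply: contrapT => never_above.
  have le_th k : (N <= k)%N -> delta k <= th.
    by move=> Nk; rewrite leNgt; apply/negP => ?; apply: never_above; exists k.
  have grow j : delta (N + j)%N = c3 ^+ j * delta N.
    elim: j => [|j IH]; first by rewrite addn0 expr0 mul1r.
    by rewrite addnS (below _ (leq_addr _ _) (le_th _ (leq_addr _ _))).2 IH exprS mulrA.
  have c3V : 0 <= c3^-1 < 1.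
    by rewrite invr_ge0 invf_lt1 ?(lt_trans ltr01) // ltW // (lt_trans ltr01).
  have [j] := exists_expr_lt c3V (divr_gt0 (delta_gt0 N) th_gt0).
  rewrite exprVn ltr_pdivlMr // ltr_pdivrMl ?exprn_gt0 ?(lt_trans ltr01) // -grow.
  by rewrite ltNge le_th ?leq_addr.
have decay j : th < delta (k0 + j)%N /\ delta (k0 + j)%N = c1 ^+ j * delta k0.
  elim: j => [|j [IH1 IH2]]; first by rewrite addn0 expr0 mul1r.
  have Nkj : (N <= k0 + j)%N := leq_trans Nk0 (leq_addr _ _).
  by rewrite addnS stay_above // (above _ Nkj IH1) IH2 exprS mulrA.
have c1_01 : 0 <= c1 < 1 by rewrite ltW.
have [j] := exists_expr_lt c1_01 (divr_gt0 th_gt0 (delta_gt0 k0)).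
rewrite ltr_pdivlMr // -(decay j).2 => /(lt_trans (decay j).1).
by rewrite ltxx.
Qed.

End Sequences.

Section VectorSequences.
Context {R : realType} {n : nat}.
Local Notation vec := 'cV[R]_n.

Lemma cvg_vec_cauchy (y : nat -> vec) :
  (forall e, 0 < e -> exists N, forall p q, (N <= p)%N -> (N <= q)%N -> enorm (y p - y q) < e) ->
  exists ys, forall e, 0 < e -> exists N, forall k, (N <= k)%N -> enorm (y k - ys) < e.
Proof.
move=> y_cauchy.
have coord_cvg (i : 'I_n) : exists l, forall e, 0 < e ->
    exists N, forall k, (N <= k)%N -> `|y k i 0 - l| < e.
  apply: cvg_real_cauchy => e e0.
  have [N HN] := y_cauchy e e0; exists N => p q Np Nq.
  by apply: le_lt_trans (HN p q Np Nq); have := ler_norm_coord (y p - y q) i; rewrite !mxE.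
have [l Hl] := fin_all_exists coord_cvg.
exists (\col_i l i) => e e0.
have n1 : 0 < n%:R + 1 :> R by rewrite ltr_pwDr ?ler0n.
pose eta := e / (n%:R + 1).
have eta0 : 0 < eta by rewrite divr_gt0.
have [Nf HNf] := fin_all_exists (fun i => Hl i eta eta0).
exists (\max_i Nf i) => k Nk.
rewrite -ltr_sqr ?nnegrE ?enorm_ge0 ?ltW // sqr_enorm dotE.
apply: (@le_lt_trans _ _ (\sum_(i < n) eta ^+ 2)).
  apply: ler_sum => i _; rewrite !mxE -expr2 -real_normK ?num_real //.
  rewrite ler_sqr ?nnegrE ?normr_ge0 ?(ltW eta0) //; apply/ltW/HNf.
  by apply: leq_trans Nk; apply: (@leq_bigmax _ (fun i => Nf i)).
rewrite sumr_const card_ord /eta -[_ ^+ 2 *+ n]mulr_natr.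
have -> : (e / (n%:R + 1)) ^+ 2 * n%:R = e ^+ 2 * (n%:R / (n%:R + 1) ^+ 2).
  by field; rewrite gt_eqF.
rewrite -[X in _ < X]mulr1 ltr_pM2l ?exprn_gt0 // ltr_pdivrMr ?exprn_gt0 // mul1r.
have : 0 <= n%:R :> R by rewrite ler0n.
nra.
Qed.

Lemma cvg_of_steps_le_decrease (x : nat -> vec) (a : nat -> R) (c m : R) K :
  0 < c -> (forall k, (K <= k)%N -> c * enorm (x k.+1 - x k) <= a k - a k.+1) ->
  (forall k, m <= a k) ->
  exists xs, forall e, 0 < e -> exists N, forall k, (N <= k)%N -> enorm (x k - xs) < e.
Proof.
move=> c0 step_le a_ge; apply: cvg_vec_cauchy => e e0.
have a_step k : (K <= k)%N -> a k.+1 <= a k.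
  move=> Kk; have := step_le k Kk; have := mulr_ge0 (ltW c0) (enorm_ge0 (x k.+1 - x k)).
  lra.
have dist_le p j : (K <= p)%N -> c * enorm (x (p + j)%N - x p) <= a p - a (p + j)%N.
  move=> Kp; elim: j => [|j IH]; first by rewrite addn0 !subrr enorm0 mulr0.
  apply: le_trans (ler_wpM2l (ltW c0) (ler_enorm_distD _ (x (p + j)%N) _)) _.
  rewrite addnS mulrDr; have := step_le _ (leq_trans Kp (leq_addr j p)); lra.
have [N [KN HN]] := nonincreasing_tail_drops_small a_step a_ge _ (mulr_gt0 e0 c0).
exists N => p q Np Nq.
wlog qp : p q Np Nq / (q <= p)%N.
  by move=> W; case: (leqP q p) => [|/ltnW] ?; [|rewrite enormBC]; apply: W.
have := dist_le q (p - q)%N (leq_trans KN Nq); rewrite subnKC // => dist_qp.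
have := HN q p; rewrite Nq qp => /(_ isT) drop_qp.
by rewrite -(ltr_pM2l c0); lra.
Qed.

End VectorSequences.

Lemma min_ratio_ge {R : realType} (delta a b e M : R) :
  0 < M -> 0 <= b <= M -> 0 <= e <= a ->
  Num.min delta (e / M) <= min_ratio delta a b.
Proof.
move=> M_gt0 /andP[b_ge0 b_le] /andP[e_ge0 e_le]; rewrite /min_ratio.
have [_|/eqP b_neq0] := eqP; first by rewrite ge_min lexx.
have b_gt0 : 0 < b by rewrite lt_def b_neq0.
rewrite le_min ge_min lexx /= ge_min; apply/orP; right.
by apply: ler_pM; rewrite ?invr_ge0 ?(ltW M_gt0) // lef_pV2 ?posrE.
Qed.

Lemma minimizer_fin_num {R : realType} {T : Type} {f : T -> R} {g : T -> \bar R} {xs x1 : T} :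
  (forall y, g y != -oo%E) -> g x1 \is a fin_num ->
  ((f xs)%:E + g xs <= (f x1)%:E + g x1)%E -> g xs \is a fin_num.
Proof.
move=> g_neqNy g_x1; rewrite -(fineK g_x1).
by case: (g xs) (g_neqNy xs) => //= _; rewrite leye_eq.
Qed.

Section ForwardBackwardEnvelope.
Context {R : realType} {n : nat}.
Local Notation vec := 'cV[R]_n.
Variables (f : vec -> R) (g : vec -> \bar R) (gam L : R) (xs : vec).
Hypothesis grad_f : forall y, is_grad f y (grad f y).
Hypothesis lip_grad_f : forall y z, enorm (grad f y - grad f z) <= L * enorm (y - z).
Hypothesis g_neqNy : forall y, g y != -oo%E.
Hypothesis g_xs : g xs \is a fin_num.
Hypothesis xs_min : forall y, ((f xs)%:E + g xs <= (f y)%:E + g y)%E.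
Hypothesis gam_gt0 : 0 < gam.
Hypothesis gamL_lt1 : gam * L < 1.

Local Notation psi := (FBE f g gam).

(* The objective minimised in [FBE_ext], with the finite value [gu] of [g u]. *)
Definition fb_objective (y u : vec) (gu : R) : R :=
  f y + dot (grad f y) (u - y) + gu + enorm (u - y) ^+ 2 / (2 * gam).

Definition fb_objective_ext (y u : vec) : \bar R :=
  ((f y + dot (grad f y) (u - y))%:E + g u + (enorm (u - y) ^+ 2 / (2 * gam))%:E)%E.

Lemma fb_objective_extE y {u gu} : g u = gu%:E -> fb_objective_ext y u = (fb_objective y u gu)%:E.
Proof. by move=> gu_; rewrite /fb_objective_ext gu_. Qed.

Definition min_phi : R := f xs + fine (g xs).

Definition fb_growth : R := 1 / (2 * gam) - L / 2.

Lemma fb_growth_gt0 : 0 < fb_growth.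
Proof.
rewrite /fb_growth subr_gt0.
have -> : L / 2 = (gam * L) / (2 * gam) by field; rewrite gt_eqF.
by rewrite ltr_pM2r ?invr_gt0 ?mulr_gt0.
Qed.

Lemma min_phi_le {u gu} : g u = gu%:E -> min_phi <= f u + gu.
Proof. by move=> gu_; have := xs_min u; rewrite -(fineK g_xs) gu_. Qed.

Lemma fb_objective_ge y {u gu} : g u = gu%:E ->
  min_phi + fb_growth * enorm (u - y) ^+ 2 <= fb_objective y u gu.
Proof.
move=> gu_; have := min_phi_le gu_.
have := descent_lemma grad_f lip_grad_f y u; rewrite ler_norml => /andP[_ descent].
have -> : fb_growth * enorm (u - y) ^+ 2
    = enorm (u - y) ^+ 2 / (2 * gam) - L / 2 * enorm (u - y) ^+ 2.
  by rewrite /fb_growth; field; rewrite gt_eqF.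
by rewrite /fb_objective; lra.
Qed.

Lemma fb_objective_ext_ge y u : (min_phi%:E <= fb_objective_ext y u)%E.
Proof.
move: (g_neqNy u); case gu_: (g u) => [gu| |] // _; last by rewrite /fb_objective_ext gu_ /= leey.
rewrite (fb_objective_extE y gu_) lee_fin; apply: le_trans (fb_objective_ge y gu_).
by rewrite lerDl mulr_ge0 ?sqr_ge0 ?(ltW fb_growth_gt0).
Qed.

Lemma FBE_extE y : FBE_ext f g gam y = (psi y)%:E.
Proof.
have lb : (min_phi%:E <= FBE_ext f g gam y)%E.
  by apply: le_ereal_inf_tmp => _ [u _ <-]; exact: fb_objective_ext_ge.
have ub : (FBE_ext f g gam y <= (fb_objective y xs (fine (g xs)))%:E)%E.
  by rewrite -fb_objective_extE ?fineK //; apply: ereal_inf_lbound; exists xs.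
by rewrite /FBE; move: lb ub; case: (FBE_ext f g gam y).
Qed.

Lemma FBE_le_objective y {u gu} : g u = gu%:E -> psi y <= fb_objective y u gu.
Proof.
move=> gu_; rewrite -lee_fin -FBE_extE -(fb_objective_extE y gu_).
by apply: ereal_inf_lbound; exists u.
Qed.

Lemma FBE_ge_min y : min_phi <= psi y.
Proof.
rewrite -lee_fin -FBE_extE.
by apply: le_ereal_inf_tmp => _ [u _ <-]; exact: fb_objective_ext_ge.
Qed.

Lemma FBE_approx y {eta} : 0 < eta ->
  exists u gu, g u = gu%:E /\ fb_objective y u gu < psi y + eta.
Proof.
move=> eta0.
have : (FBE_ext f g gam y < (psi y + eta)%:E)%E by rewrite FBE_extE lte_fin ltrDl.
move=> /ereal_inf_lt [_ [u _ <-]]; rewrite -/(fb_objective_ext y u).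
move: (g_neqNy u); case gu_: (g u) => [gu| |] // _; last by rewrite /fb_objective_ext gu_.
by rewrite (fb_objective_extE y gu_) lte_fin => ?; exists u, gu.
Qed.

Lemma near_optimal_dist_le {y u gu b} : g u = gu%:E -> psi y <= b ->
  fb_objective y u gu <= psi y + 1 -> enorm (u - y) <= (b + 1 - min_phi) / fb_growth + 1.
Proof.
move=> gu_ psi_le obj_le; have growth := fb_objective_ge y gu_.
set w := enorm (u - y) in growth *.
have : w ^+ 2 <= (b + 1 - min_phi) / fb_growth.
  rewrite ler_pdivlMr ?fb_growth_gt0 // mulrC; lra.
have : w <= w ^+ 2 + 1 by rewrite expr2; nra.
lra.
Qed.

Hypothesis jac_grad_f : forall y, is_jac (grad f) y (jac (grad f) y).

Lemma fb_objective_shift_le (x d u : vec) gu K :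
  (forall t, 0 <= t <= 1 -> opnorm (hess f (x + t *: d) - hess f x) <= K * t * enorm d) ->
  fb_objective (x + d) u gu <= fb_objective x u gu
     + (dot (hess f x *m d) (u - x) - dot (u - x) d / gam)
     + (L / 2 + K * enorm (u - x) / 2 + 1 / (2 * gam)) * enorm d ^+ 2.
Proof.
move=> HK.
have := descent_lemma grad_f lip_grad_f (x + d) x.
rewrite opprD addrA subrr add0r dotNr enormN ler_norml => /andP[descent _].
have taylor := grad_taylor_le x d (u - x) jac_grad_f HK.
rewrite /fb_objective (_ : u - (x + d) = (u - x) - d) ?opprD ?addrA //.
rewrite dotBr sqr_enormB.
have -> : (enorm (u - x) ^+ 2 - 2 * dot (u - x) d + enorm d ^+ 2) / (2 * gam)
    = enorm (u - x) ^+ 2 / (2 * gam) - dot (u - x) d / gam + 1 / (2 * gam) * enorm d ^+ 2.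
  by field; rewrite gt_eqF.
have -> : (L / 2 + K * enorm (u - x) / 2 + 1 / (2 * gam)) * enorm d ^+ 2
    = L / 2 * enorm d ^+ 2 + K / 2 * enorm d ^+ 2 * enorm (u - x)
      + 1 / (2 * gam) * enorm d ^+ 2 by ring.
lra.
Qed.

(* Every almost optimal [u] in the definition of [psi x] yields a quadratic
   majorant of [psi] near [x]. *)
Lemma FBE_upper_quadratic (x G : vec) (K D Rw : R) :
  is_grad psi x G -> 0 <= K ->
  (forall y, enorm (y - x) <= D -> opnorm (hess f y - hess f x) <= K * enorm (y - x)) ->
  (forall u gu, g u = gu%:E -> fb_objective x u gu <= psi x + 1 -> enorm (u - x) <= Rw) ->
  forall d, enorm d <= D ->
  psi (x + d) <= psi x + dot G d + (L / 2 + K * Rw / 2 + 1 / (2 * gam)) * enorm d ^+ 2.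
Proof.
move=> HGx K0 HK HRw; apply: (quadratic_majorant_grad HGx) => nu nu0.
have nu1 : 0 < Num.min nu 1 by rewrite lt_min nu0 ltr01.
have [u [gu [gu_ obj_lt]]] := FBE_approx x nu1.
have dist_u : enorm (u - x) <= Rw.
  by apply: HRw gu_ _; apply/ltW/(lt_le_trans obj_lt); rewrite lerD2l ge_min lexx orbT.
set w := u - x in dist_u *.
exists ((hess f x)^T *m w - gam^-1 *: w), (fb_objective x u gu); split.
  by apply: lt_le_trans obj_lt _; rewrite lerD2l ge_min lexx.
move=> e eD.
apply: le_trans (FBE_le_objective (x + e) gu_) _.
apply: le_trans (fb_objective_shift_le x e u gu K _) _.
  move=> t /andP[t0 t1].
  have te : enorm (x + t *: e - x) = t * enorm e.
    by rewrite addrAC subrr add0r enormZ ger0_norm.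
  rewrite -mulrA -te; apply: HK; rewrite te.
  by apply: le_trans eD; rewrite ler_piMl ?enorm_ge0.
have -> : dot ((hess f x)^T *m w - gam^-1 *: w) e = dot (hess f x *m e) w - dot w e / gam.
  by rewrite dotBl dotZl (dotC _ e) -dot_mulmxl [gam^-1 * _]mulrC.
rewrite lerD2l; apply: ler_wpM2r; first exact: sqr_ge0.
by rewrite lerD2r lerD2l ler_wpM2r // ler_wpM2l.
Qed.

Section TrustRegion.
Local Notation mat := 'M[R]_n.
Variables (mu1 mu2 c1 c2 c3 M beta : R).
Variables (x d : nat -> vec) (delta : nat -> R) (P : nat -> mat).

Let B k := Bmat f gam (x k) (P k).
Let G k := grad psi (x k).
Let predicted k := model f g gam (x k) (B k) 0 - model f g gam (x k) (B k) (d k).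
Let ratio k := (psi (x k) - psi (x k + d k)) / predicted k.

Hypothesis hess_loclip : forall y, exists r K : R, 0 < r /\ forall z w,
  enorm (z - y) < r -> enorm (w - y) < r -> opnorm (hess f z - hess f w) <= K * enorm (z - w).
Hypothesis L_ge0 : 0 <= L.
Hypothesis delta0_gt0 : 0 < delta 0.
Hypothesis mu1_gt0 : 0 < mu1.
Hypothesis mu1_lt_mu2 : mu1 < mu2.
Hypothesis mu2_lt1 : mu2 < 1.
Hypothesis c1_gt0 : 0 < c1.
Hypothesis c1_lt_c2 : c1 < c2.
Hypothesis c2_lt1 : c2 < 1.
Hypothesis c3_gt1 : 1 < c3.
Hypothesis d_le : forall k, enorm (d k) <= delta k.
Hypothesis step : forall k,
  (x k.+1 = if ratio k < mu1 then x k else x k + d k) /\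
  (delta k.+1 = if ratio k < mu1 then c1 * delta k
                else if ratio k < mu2 then c2 * delta k else c3 * delta k).
Hypothesis M_gt0 : 0 < M.
Hypothesis B_le : forall k, opnorm (B k) <= M.
Hypothesis beta_gt0 : 0 < beta.
Hypothesis decrease : forall k,
  beta * enorm (G k) * min_ratio (delta k) (enorm (G k)) (opnorm (B k)) <= predicted k.

Let rejected k : ratio k < mu1 -> x k.+1 = x k /\ delta k.+1 = c1 * delta k.
Proof. by move=> r_lt; have [-> ->] := step k; rewrite r_lt. Qed.

Let accepted k : mu1 <= ratio k -> x k.+1 = x k + d k.
Proof. by rewrite leNgt => /negbTE r_ge; have [-> _] := step k; rewrite r_ge. Qed.

Let delta_gt0 k : 0 < delta k.
Proof.
have c2_gt0 := lt_trans c1_gt0 c1_lt_c2; have c3_gt0 := lt_trans ltr01 c3_gt1.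
elim: k => // k IH; have [_ ->] := step k.
by case: ifP => _; [|case: ifP => _]; rewrite mulr_gt0.
Qed.

Let predictedE k : predicted k = - dot (G k) (d k) - 1 / 2 * dot (B k *m d k) (d k).
Proof. by rewrite /predicted /model dot0r mulmx0 dot0r; ring. Qed.

Section GradientBoundedAway.
Variables (eps : R) (K0 : nat).
Hypothesis eps_gt0 : 0 < eps.
Hypothesis grad_ge : forall k, (K0 <= k)%N -> eps <= enorm (G k).

Let predicted_ge k : (K0 <= k)%N -> beta * eps * Num.min (delta k) (eps / M) <= predicted k.
Proof.
move=> Kk; apply: le_trans (decrease k).
have min_gt0 : 0 < Num.min (delta k) (eps / M) by rewrite lt_min delta_gt0 divr_gt0.
apply: ler_pM; last 2 first.
- by rewrite ler_pM2l // grad_ge.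
- by apply: min_ratio_ge; rewrite // ?opnorm_ge0 ?B_le ?(ltW eps_gt0) ?grad_ge.
- by rewrite mulr_ge0 // ltW.
- exact: ltW.
Qed.

Let predicted_gt0 k : (K0 <= k)%N -> 0 < predicted k.
Proof.
move=> Kk; apply: lt_le_trans (predicted_ge k Kk).
by rewrite !mulr_gt0 // lt_min delta_gt0 divr_gt0.
Qed.

Let accepted_decrease k : (K0 <= k)%N -> mu1 <= ratio k ->
  mu1 * predicted k <= psi (x k) - psi (x k.+1).
Proof.
move=> Kk r_ge; rewrite accepted //.
by rewrite -ler_pdivlMr ?(predicted_gt0 k Kk).
Qed.

Let psi_step_le k : (K0 <= k)%N -> psi (x k.+1) <= psi (x k).
Proof.
move=> Kk; have [r_lt|r_ge] := ltP (ratio k) mu1; first by rewrite (rejected k r_lt).1.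
have := accepted_decrease k Kk r_ge.
have : 0 < mu1 * predicted k by rewrite mulr_gt0 ?(predicted_gt0 k Kk).
lra.
Qed.

Let accepted_radius_small s : 0 < s -> s <= eps / M ->
  exists N, (K0 <= N)%N /\ forall k, (N <= k)%N -> mu1 <= ratio k -> delta k < s.
Proof.
move=> s_gt0 s_le.
have [N [KN drop_lt]] := nonincreasing_tail_drops_small psi_step_le (fun k => FBE_ge_min (x k))
  _ (mulr_gt0 mu1_gt0 (mulr_gt0 (mulr_gt0 beta_gt0 eps_gt0) s_gt0)).
exists N; split => // k Nk r_ge; have Kk := leq_trans KN Nk.
have := drop_lt k k.+1; rewrite Nk leqnSn => /(_ isT) drop_k.
have : mu1 * (beta * eps * Num.min (delta k) (eps / M)) < mu1 * (beta * eps * s).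
  have := accepted_decrease k Kk r_ge.
  have : mu1 * (beta * eps * Num.min (delta k) (eps / M)) <= mu1 * predicted k.
    by rewrite ler_pM2l ?predicted_ge.
  lra.
rewrite ltr_pM2l // ltr_pM2l ?mulr_gt0 // gt_min => /orP[//|].
by move/lt_le_trans => /(_ _ s_le); rewrite ltxx.
Qed.

Let iterates_cvg :
  exists xlim, forall e, 0 < e -> exists N, forall k, (N <= k)%N -> enorm (x k - xlim) < e.
Proof.
have [N [KN small]] := accepted_radius_small _ (divr_gt0 eps_gt0 M_gt0) (lexx _).
apply: (@cvg_of_steps_le_decrease _ _ x (fun k => psi (x k)) (mu1 * beta * eps)
  min_phi N) => [||k]; [by rewrite !mulr_gt0| |exact: FBE_ge_min].
move=> k Nk.
have [r_lt|r_ge] := ltP (ratio k) mu1.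
  by rewrite (rejected k r_lt).1 !subrr enorm0 mulr0.
have Kk := leq_trans KN Nk.
have min_delta : Num.min (delta k) (eps / M) = delta k by rewrite min_l // ltW ?small.
have := accepted_decrease k Kk r_ge; have := predicted_ge k Kk; rewrite min_delta.
rewrite [in enorm _](accepted k r_ge) addrAC subrr add0r => predicted_k decr_k.
apply: le_trans (_ : mu1 * predicted k <= _) => //.
rewrite -!mulrA ler_pM2l // mulrA; apply: le_trans predicted_k.
by apply: ler_wpM2l; [rewrite mulr_ge0 // ltW|exact: d_le].
Qed.

Let psi_upper_quadratic_eventually : exists C r N, 0 <= C /\ 0 < r /\
  forall k, (N <= k)%N -> forall e, enorm e <= r ->
    psi (x k + e) <= psi (x k) + dot (G k) e + C * enorm e ^+ 2.
Proof.
have [xlim x_xlim] := iterates_cvg.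
have [r [Kh [r_gt0 hess_lip]]] := hess_loclip xlim.
have [N near_xlim] := x_xlim (r / 2) (divr_gt0 r_gt0 (ltr0Sn _ 1)).
pose Rw := (psi (x K0) + 1 - min_phi) / fb_growth + 1.
have Rw_ge0 : 0 <= Rw.
  rewrite addr_ge0 // divr_ge0 ?(ltW fb_growth_gt0) //.
  by have := FBE_ge_min (x K0); lra.
exists (L / 2 + `|Kh| * Rw / 2 + 1 / (2 * gam)), (r / 2), (maxn K0 N).
split; first by rewrite !addr_ge0 ?divr_ge0 ?mulr_ge0 // ltW.
split; first by rewrite divr_gt0.
move=> k; rewrite geq_max => /andP[Kk Nk] e e_le.
apply: (FBE_upper_quadratic (x k) (G k) `|Kh| (r / 2) Rw) => //.
- apply: grad_neq0_is_grad; apply/eqP => G0.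
  by have := grad_ge k Kk; rewrite /G G0 enorm0 leNgt eps_gt0.
- move=> y y_le; apply: le_trans (hess_lip _ _ _ _) _.
  + by apply: le_lt_trans (ler_enorm_distD _ (x k) _) _; have := near_xlim k Nk; lra.
  + by have := near_xlim k Nk; lra.
  + by rewrite ler_wpM2r ?enorm_ge0 ?ler_norm.
- move=> u gu gu_ obj_le.
  have psi_le : psi (x k) <= psi (x K0).
    by apply: (le_tail_nonincreasing psi_step_le); rewrite leqnn.
  exact: near_optimal_dist_le gu_ psi_le obj_le.
Qed.

Let ratio_ge_mu2_eventually : exists th N, 0 < th /\ th <= eps / M /\
  forall k, (N <= k)%N -> delta k <= th -> mu2 <= ratio k.
Proof.
have [C [r [N [C_ge0 [r_gt0 upper]]]]] := psi_upper_quadratic_eventually.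
have MC_gt0 : 0 < M / 2 + C by rewrite ltr_pwDl ?divr_gt0.
exists (Num.min r (Num.min (eps / M) ((1 - mu2) * beta * eps / (M / 2 + C)))), (maxn K0 N).
split; first by rewrite !lt_min r_gt0 !divr_gt0 ?mulr_gt0 ?subr_gt0.
split; first by rewrite !ge_min lexx orbT.
move=> k; rewrite geq_max => /andP[Kk Nk]; rewrite !le_min => /and3P[dr dM dC].
have := predicted_ge k Kk; rewrite min_l // => predicted_k.
have upper_k := upper k Nk (d k) (le_trans (d_le k) dr).
have quad := norm_dot_mulmx_le (B k) (d k).
have d2 : enorm (d k) ^+ 2 <= delta k ^+ 2.
  by rewrite ler_sqr ?nnegrE ?enorm_ge0 ?(ltW (delta_gt0 k)) ?d_le.
have small : (M / 2 + C) * delta k ^+ 2 <= (1 - mu2) * beta * eps * delta k.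
  rewrite expr2 mulrA; apply: ler_wpM2r; first exact: ltW.
  by rewrite mulrC -ler_pdivlMr.
rewrite /ratio ler_pdivlMr ?(predicted_gt0 k Kk) //.
have := ler_wpM2r (sqr_ge0 (enorm (d k))) (B_le k).
have := ler_wpM2l (ltW MC_gt0) d2.
have mu2_le1 : 0 <= 1 - mu2 by rewrite subr_ge0; apply: ltW.
have := ler_wpM2l mu2_le1 predicted_k.
move: quad; rewrite ler_norml predictedE => /andP[quad _].
rewrite predictedE in upper_k predicted_k *; lra.
Qed.

Lemma gradient_FBE_not_bounded_away : False.
Proof.
have [th [N1 [th_gt0 [th_le ratio_ge]]]] := ratio_ge_mu2_eventually.
have c1_lt1 : c1 < 1 := lt_trans c1_lt_c2 c2_lt1.
have c1th_le : c1 * th <= eps / M by apply: le_trans th_le; rewrite ler_piMl ?ltW.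
have [N2 [_ small]] := accepted_radius_small _ (mulr_gt0 c1_gt0 th_gt0) c1th_le.
apply: (radius_gap_absurd (maxn N1 N2) c1_gt0 c1_lt1 c3_gt1 th_gt0 delta_gt0).
- move=> k; rewrite geq_max => /andP[N1k N2k] delta_le.
  have r_ge := ratio_ge k N1k delta_le.
  have r_ge1 : mu1 <= ratio k by apply: le_trans r_ge; rewrite ltW.
  split; first exact: small.
  by have [_ ->] := step k; rewrite !ltNge r_ge r_ge1.
- move=> k; rewrite geq_max => /andP[N1k N2k] th_lt.
  have [r_lt|r_ge] := ltP (ratio k) mu1; first exact: (rejected k r_lt).2.
  have c1th_lt : c1 * th < th by rewrite gtr_pMl.
  have := lt_trans th_lt (lt_trans (small k N2k r_ge) c1th_lt).
  by rewrite ltxx.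
Qed.

End GradientBoundedAway.

Lemma liminf_grad_FBE_eq0 : limn_einf (fun k => (enorm (G k))%:E) = 0%E.
Proof.
apply: limn_einf_eq0 => [k|eps eps_gt0 K0]; first exact: enorm_ge0.
apply: contrapT => far; apply: (gradient_FBE_not_bounded_away _ K0 eps_gt0) => k Kk.
by rewrite leNgt; apply/negP => G_lt; apply: far; exists k.
Qed.

End TrustRegion.

End ForwardBackwardEnvelope.

Theorem theoremA4 (R : realType) (n : nat)
  (f : 'cV[R]_n -> R) (g : 'cV[R]_n -> \bar R) (Lf rho : R)
  (x0 : 'cV[R]_n) (gam delta0 mu1 mu2 c1 c2 c3 M beta : R)
  (x d : nat -> 'cV[R]_n) (delta : nat -> R) (P : nat -> 'M[R]_n) :
  (* standing assumptions on f, g, phi = f + g *)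
  C2plus f ->
  0 <= Lf ->
  (forall y z, enorm (grad f y - grad f z) <= Lf * enorm (y - z)) ->
  proper_fun g -> lsc g -> 0 <= rho -> weakly_convex rho g ->
  (exists xs, forall y, ((f xs)%:E + g xs <= (f y)%:E + g y)%E) ->
  (exists r : R, forall y, ((f y)%:E + g y <= (f x0)%:E + g x0)%E -> enorm y <= r) ->
  (* parameters of NTRA: gam in (0, min{1/Lf, 1/rho}) *)
  0 < gam -> gam * Lf < 1 -> gam * rho < 1 ->
  0 < delta0 -> 0 < mu1 -> mu1 < mu2 -> mu2 < 1 ->
  0 < c1 -> c1 < c2 -> c2 < 1 -> 1 < c3 ->
  (* the iterates of NTRA *)
  x 0%N = x0 -> delta 0%N = delta0 ->
  (forall k, clarke_jac (prox gam g) (x k - gam *: grad f (x k)) (P k)) ->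
  (* the algorithm never stops *)
  (forall k, ~ (Rgam f g gam (x k) = 0 /\
               forall a, eigenvalue (Bmat f gam (x k) (P k)) a -> 0 <= a)) ->
  (forall k, enorm (d k) <= delta k) ->
  (forall k,
    let B := Bmat f gam (x k) (P k) in
    let rk := (FBE f g gam (x k) - FBE f g gam (x k + d k)) /
              (model f g gam (x k) B 0 - model f g gam (x k) B (d k)) in
    (x k.+1 = if rk < mu1 then x k else x k + d k) /\
    (delta k.+1 = if rk < mu1 then c1 * delta k
                  else if rk < mu2 then c2 * delta k else c3 * delta k)) ->
  (* additional assumptions *)
  0 < M -> (forall k, opnorm (Bmat f gam (x k) (P k)) <= M) ->
  0 < beta -> beta < 1 ->
  (forall k,
    let B := Bmat f gam (x k) (P k) in
    let G := enorm (grad (FBE f g gam) (x k)) in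
    model f g gam (x k) B 0 - model f g gam (x k) B (d k)
      >= beta * G * min_ratio (delta k) G (opnorm B)) ->
  limn_einf (fun k => (enorm (grad (FBE f g gam) (x k)))%:E) = 0%E.
Proof.
move=> [grad_ex [jac_ex [_ hess_loclip]]] L_ge0 lip_grad_f [g_neqNy [x1 g_x1]] _ _ _
  [xs xs_min] _ gam_gt0 gamL_lt1 _ delta0_gt0 mu1_gt0 mu1_lt_mu2 mu2_lt1 c1_gt0 c1_lt_c2
  c2_lt1 c3_gt1 _ delta_0 _ _ d_le step M_gt0 B_le beta_gt0 _ decrease.
have grad_f y := grad_is_grad (grad_ex y).
have jac_grad_f y := jac_is_jac (jac_ex y).
have g_xs := minimizer_fin_num g_neqNy g_x1 (xs_min x1).
rewrite -delta_0 in delta0_gt0.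
exact: (@liminf_grad_FBE_eq0 _ _ f g gam Lf xs grad_f lip_grad_f g_neqNy g_xs xs_min
  gam_gt0 gamL_lt1 jac_grad_f mu1 mu2 c1 c2 c3 M beta x d delta P hess_loclip L_ge0
  delta0_gt0 mu1_gt0 mu1_lt_mu2 mu2_lt1 c1_gt0 c1_lt_c2 c2_lt1 c3_gt1 d_le step
  M_gt0 B_le beta_gt0 decrease).
Qed.
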